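(* Fix $\gamma\neq0$. Consider the subclass of equations $i\psi_t+\psi_{xx}+|\psi|^\gamma\psi+V\psi=0$ with stationary potentials, i.e. $V=V(x)$ an arbitrary smooth complex-valued function of $x$. The intersection of the maximal Lie invariance algebras of all equations in this subclass is $\langle M,\ D(1)\rangle=\langle M,\ \partial_t\rangle$.
   Context: $M=i(\psi\partial_\psi-\psi^*\partial_{\psi^*})$, and $D(1)=\partial_t$. Lie symmetries are vector fields on the space of $(t,x,\psi,\psi^* )$, with $\psi^*$ treated as an independent variable. *)

From Stdlib Require Import Reals List.
From Coquelicot Require Import Coquelicot.
Open Scope R_scope.

(* ---------- Second-order jet space for two dependent variables ----------
   psi = u + i v (real form; psi^* = u - i v).  A point of the second-order
   jet space J^2 over (t,x) is represented as p : nat -> R whose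
   coordinates 0..13 are named below (other coordinates are irrelevant). *)
Definition jT := 0%nat.   Definition jX := 1%nat.
Definition jU := 2%nat.   Definition jV := 3%nat.
Definition jUt := 4%nat.  Definition jUx := 5%nat.
Definition jVt := 6%nat.  Definition jVx := 7%nat.
Definition jUtt := 8%nat. Definition jUtx := 9%nat. Definition jUxx := 10%nat.
Definition jVtt := 11%nat. Definition jVtx := 12%nat. Definition jVxx := 13%nat.

Definition jet := nat -> R.

Definition upd (p : jet) (k : nat) (s : R) : jet :=
  fun j => if Nat.eqb j k then s else p j.

Definition pd (k : nat) (g : jet -> R) : jet -> R :=
  fun p => Derive (fun s => g (upd p k s)) (p k).

Fixpoint iter_pd (l : list nat) (g : jet -> R) : jet -> R :=
  match l with nil => g | k :: l' => pd k (iter_pd l' g) end.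

Definition smooth_on (n : nat) (P : jet -> Prop) (g : jet -> R) : Prop :=
  forall (l : list nat) (k : nat) (p : jet),
    List.Forall (fun i : nat => (i < n)%nat) l -> (k < n)%nat -> P p ->
    ex_derive (fun s => iter_pd l g (upd p k s)) (p k).

Definition smooth1 (f : R -> R) : Prop :=
  forall (n : nat) (y : R), ex_derive (Derive_n f n) y.

Definition dom (p : jet) : Prop := 0 < p jU ^ 2 + p jV ^ 2.

(* ---------- vector fields on (t,x,u,v) space ----------
   Q = tau d_t + xi d_x + phi d_u + chi d_v; in complex notation
   Q = tau d_t + xi d_x + eta d_psi + eta^* d_psi^*, eta = phi + i chi. *)
Record vfield := VField {
  vf_tau : R -> R -> R -> R -> R;
  vf_xi  : R -> R -> R -> R -> R;
  vf_phi : R -> R -> R -> R -> R;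
  vf_chi : R -> R -> R -> R -> R }.

Definition lift (f : R -> R -> R -> R -> R) : jet -> R :=
  fun p => f (p jT) (p jX) (p jU) (p jV).

Definition smooth_vfield (Q : vfield) : Prop :=
  smooth_on 4 dom (lift (vf_tau Q)) /\ smooth_on 4 dom (lift (vf_xi Q)) /\
  smooth_on 4 dom (lift (vf_phi Q)) /\ smooth_on 4 dom (lift (vf_chi Q)).

(* total derivatives, acting on functions of jets of order <= 1 *)
Definition Dt (g : jet -> R) : jet -> R := fun p =>
  pd jT g p + p jUt * pd jU g p + p jVt * pd jV g p
  + p jUtt * pd jUt g p + p jUtx * pd jUx g p
  + p jVtt * pd jVt g p + p jVtx * pd jVx g p.

Definition Dx (g : jet -> R) : jet -> R := fun p =>
  pd jX g p + p jUx * pd jU g p + p jVx * pd jV g p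
  + p jUtx * pd jUt g p + p jUxx * pd jUx g p
  + p jVtx * pd jVt g p + p jVxx * pd jVx g p.

Definition pr2 (Q : vfield) (g : jet -> R) : jet -> R := fun p =>
  let ta := lift (vf_tau Q) in let xi := lift (vf_xi Q) in
  let ph := lift (vf_phi Q) in let ch := lift (vf_chi Q) in
  let ph_t := fun q => Dt ph q - q jUt * Dt ta q - q jUx * Dt xi q in
  let ph_x := fun q => Dx ph q - q jUt * Dx ta q - q jUx * Dx xi q in
  let ch_t := fun q => Dt ch q - q jVt * Dt ta q - q jVx * Dt xi q in
  let ch_x := fun q => Dx ch q - q jVt * Dx ta q - q jVx * Dx xi q in
  let ph_tt := Dt ph_t p - p jUtt * Dt ta p - p jUtx * Dt xi p in
  let ph_tx := Dx ph_t p - p jUtt * Dx ta p - p jUtx * Dx xi p in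
  let ph_xx := Dx ph_x p - p jUtx * Dx ta p - p jUxx * Dx xi p in
  let ch_tt := Dt ch_t p - p jVtt * Dt ta p - p jVtx * Dt xi p in
  let ch_tx := Dx ch_t p - p jVtt * Dx ta p - p jVtx * Dx xi p in
  let ch_xx := Dx ch_x p - p jVtx * Dx ta p - p jVxx * Dx xi p in
  ta p * pd jT g p + xi p * pd jX g p + ph p * pd jU g p + ch p * pd jV g p
  + ph_t p * pd jUt g p + ph_x p * pd jUx g p
  + ch_t p * pd jVt g p + ch_x p * pd jVx g p
  + ph_tt * pd jUtt g p + ph_tx * pd jUtx g p + ph_xx * pd jUxx g p
  + ch_tt * pd jVtt g p + ch_tx * pd jVtx g p + ch_xx * pd jVxx g p.

(* The equation  i psi_t + psi_xx + |psi|^gamma psi + V(x) psi = 0,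
   V = a + i b, written as its real part (NLS_re) and imaginary part (NLS_im);
   |psi|^gamma = (u^2+v^2)^(gamma/2). *)
Definition rho (gamma : R) (p : jet) : R := Rpower (p jU ^ 2 + p jV ^ 2) (gamma / 2).

Definition NLS_re (gamma : R) (a b : R -> R) : jet -> R := fun p =>
  - p jVt + p jUxx + rho gamma p * p jU + a (p jX) * p jU - b (p jX) * p jV.

Definition NLS_im (gamma : R) (a b : R -> R) : jet -> R := fun p =>
  p jUt + p jVxx + rho gamma p * p jV + a (p jX) * p jV + b (p jX) * p jU.

Definition is_lie_symmetry (gamma : R) (a b : R -> R) (Q : vfield) : Prop :=
  forall p : jet, dom p -> NLS_re gamma a b p = 0 -> NLS_im gamma a b p = 0 ->
    pr2 Q (NLS_re gamma a b) p = 0 /\ pr2 Q (NLS_im gamma a b) p = 0.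

(* Q = c1 M + c2 d_t, with M = i(psi d_psi - psi^* d_psi^* ) = -v d_u + u d_v *)
Definition in_span_M_Dt (Q : vfield) : Prop :=
  exists c1 c2 : R, forall t x u v : R, 0 < u ^ 2 + v ^ 2 ->
    vf_tau Q t x u v = c2 /\ vf_xi Q t x u v = 0 /\
    vf_phi Q t x u v = - c1 * v /\ vf_chi Q t x u v = c1 * u.

(* A common symmetry is in particular a symmetry for every affine potential [V = a + i b].
   Evaluating the invariance criterion at jets that solve the equation and whose second
   derivatives vanish gives successively: [xi = 0] (compare [a = x - x0] with [a = 0]);
   [tau = tau(t)] (the coefficient of [u_tx] is [-2 D_x tau]); and, varying constant
   potentials, that [eta/psi - tau_t log psi] does not depend on [psi], where
   [eta = phi + i chi]. On the positive real axis this means [phi = y (F + tau_t ln y)],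
   and there the real part of the equation becomes [gamma y^gamma (F + tau_t ln y) = const],
   which for [gamma <> 0] forces [F = tau_t = 0]. Hence [eta = i G psi]; varying [v_x] shows
   [G_x = 0] and the equation on the axis shows [G_t = 0]. *)

From Pilot Require Import Defs.
From Stdlib Require Import Reals Lra Lia List.
From Coquelicot Require Import Coquelicot.
(* [Reals] exports its own [Dx]; this makes [Dx] the total x-derivative again. *)
Import Defs.
Open Scope R_scope.

(** * Jet calculus *)

Lemma upd_eq (p : jet) (k : nat) (s : R) : upd p k s k = s.
Proof. unfold upd; rewrite Nat.eqb_refl; reflexivity. Qed.

Lemma upd_neq (p : jet) (k j : nat) (s : R) : j <> k -> upd p k s j = p j.
Proof. intro Hjk; unfold upd; apply Nat.eqb_neq in Hjk; rewrite Hjk; reflexivity. Qed.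

Lemma upd_same (p : jet) (k j : nat) : upd p k (p k) j = p j.
Proof. unfold upd; destruct (Nat.eqb_spec j k); subst; reflexivity. Qed.

Ltac jet_index :=
  unfold jT, jX, jU, jV, jUt, jUx, jVt, jVx, jUtt, jUtx, jUxx, jVtt, jVtx, jVxx in *; lia.

Lemma pd_eq0 (k : nat) (g : jet -> R) (p : jet) :
  (forall s, g (upd p k s) = g p) -> pd k g p = 0.
Proof.
  intro Hg; unfold pd.
  rewrite (Derive_ext _ (fun _ => g p)) by exact Hg.
  apply Derive_const.
Qed.

Lemma pd_affine (k : nat) (g : jet -> R) (p : jet) (c : R) :
  (forall s, g (upd p k s) - g p = c * (s - p k)) -> pd k g p = c.
Proof.
  intro Hg; unfold pd; apply is_derive_unique.
  apply (is_derive_ext (fun s => g p + c * (s - p k))).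
  - intro s; specialize (Hg s); lra.
  - auto_derive; auto; ring.
Qed.

Definition agree_on (L : list nat) (p q : jet) : Prop := forall j, In j L -> p j = q j.

Definition depends_only_on (L : list nat) (g : jet -> R) : Prop :=
  forall p q, agree_on L p q -> g p = g q.

Lemma depends_only_on_incl (L L' : list nat) (g : jet -> R) :
  incl L L' -> depends_only_on L g -> depends_only_on L' g.
Proof. intros HL Hg p q Hpq; apply Hg; intros j Hj; apply Hpq, HL, Hj. Qed.

Lemma agree_on_upd_not_in (L : list nat) (p : jet) (k : nat) (s : R) :
  ~ In k L -> agree_on L (upd p k s) p.
Proof. intros Hk j Hj; apply upd_neq; intros ->; contradiction. Qed.

Lemma pd_depends_only_on (L : list nat) (g : jet -> R) (k : nat) (p q : jet) :
  depends_only_on L g -> agree_on L p q -> p k = q k -> pd k g p = pd k g q.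
Proof.
  intros Hg Hpq Hk; unfold pd; rewrite Hk.
  apply Derive_ext; intro s; apply Hg.
  intros j Hj; unfold upd; destruct (Nat.eqb j k); auto.
Qed.

Lemma pd_not_in (L : list nat) (g : jet -> R) (k : nat) (p : jet) :
  depends_only_on L g -> ~ In k L -> pd k g p = 0.
Proof. intros Hg Hk; apply pd_eq0; intro s; apply Hg, agree_on_upd_not_in, Hk. Qed.

Lemma pd_ext (k : nat) (g h : jet -> R) (p : jet) : (forall q, g q = h q) -> pd k g p = pd k h p.
Proof. intro Hgh; unfold pd; apply Derive_ext; intro; apply Hgh. Qed.

Lemma locally_pos_of_ex_derive (f : R -> R) (y : R) :
  ex_derive f y -> 0 < f y -> locally y (fun s => 0 < f s).
Proof.
  intros Hf Hpos.
  assert (Hc : continuity_pt f y)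
    by (apply continuity_pt_filterlim, (ex_derive_continuous f), Hf).
  apply continuity_pt_locally with (eps := mkposreal _ Hpos) in Hc.
  eapply filter_imp; [|exact Hc]; simpl; intros s Hs.
  apply Rabs_def2 in Hs; lra.
Qed.

Lemma dom_upd_locally (p : jet) (k : nat) :
  dom p -> locally (p k) (fun s => dom (upd p k s)).
Proof.
  intro Hp; apply locally_pos_of_ex_derive.
  - unfold upd; destruct (Nat.eqb jU k), (Nat.eqb jV k); auto_derive; auto.
  - rewrite !upd_same; exact Hp.
Qed.

Lemma pd_ext_dom (k : nat) (g h : jet -> R) (p : jet) :
  (forall q, dom q -> g q = h q) -> dom p -> pd k g p = pd k h p.
Proof.
  intros Hgh Hp; unfold pd; apply Derive_ext_loc.
  eapply filter_imp; [|exact (dom_upd_locally p k Hp)].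
  intros s Hs; apply Hgh, Hs.
Qed.

Lemma Dx_ext_dom (g h : jet -> R) (p : jet) :
  (forall q, dom q -> g q = h q) -> dom p -> Dx g p = Dx h p.
Proof. intros Hgh Hp; unfold Dx; rewrite !(pd_ext_dom _ g h p Hgh Hp); reflexivity. Qed.

Definition dT (f : R -> R -> R -> R -> R) : R -> R -> R -> R -> R :=
  fun t x u v => Derive (fun s => f s x u v) t.
Definition dX (f : R -> R -> R -> R -> R) : R -> R -> R -> R -> R :=
  fun t x u v => Derive (fun s => f t s u v) x.
Definition dU (f : R -> R -> R -> R -> R) : R -> R -> R -> R -> R :=
  fun t x u v => Derive (fun s => f t x s v) u.
Definition dV (f : R -> R -> R -> R -> R) : R -> R -> R -> R -> R :=
  fun t x u v => Derive (fun s => f t x u s) v.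

Lemma pd_lift_T (f : R -> R -> R -> R -> R) (p : jet) : pd jT (lift f) p = lift (dT f) p.
Proof. reflexivity. Qed.

Lemma pd_lift_X (f : R -> R -> R -> R -> R) (p : jet) : pd jX (lift f) p = lift (dX f) p.
Proof. reflexivity. Qed.

Lemma pd_lift_U (f : R -> R -> R -> R -> R) (p : jet) : pd jU (lift f) p = lift (dU f) p.
Proof. reflexivity. Qed.

Lemma pd_lift_V (f : R -> R -> R -> R -> R) (p : jet) : pd jV (lift f) p = lift (dV f) p.
Proof. reflexivity. Qed.

Lemma Dt_lift (f : R -> R -> R -> R -> R) (q : jet) :
  Dt (lift f) q = lift (dT f) q + q jUt * lift (dU f) q + q jVt * lift (dV f) q.
Proof.
  unfold Dt; rewrite (pd_eq0 jUt), (pd_eq0 jUx), (pd_eq0 jVt), (pd_eq0 jVx) by reflexivity.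
  rewrite pd_lift_T, pd_lift_U, pd_lift_V; ring.
Qed.

Lemma Dx_lift (f : R -> R -> R -> R -> R) (q : jet) :
  Dx (lift f) q = lift (dX f) q + q jUx * lift (dU f) q + q jVx * lift (dV f) q.
Proof.
  unfold Dx; rewrite (pd_eq0 jUt), (pd_eq0 jUx), (pd_eq0 jVt), (pd_eq0 jVx) by reflexivity.
  rewrite pd_lift_X, pd_lift_U, pd_lift_V; ring.
Qed.

Lemma pd_first_order_combination (k : nat) (A B C : jet -> R) (p : jet) : (k < 4)%nat ->
  ex_derive (fun s => A (upd p k s)) (p k) -> ex_derive (fun s => B (upd p k s)) (p k) ->
  ex_derive (fun s => C (upd p k s)) (p k) ->
  pd k (fun q => A q + q jUx * B q + q jVx * C q) p
  = pd k A p + p jUx * pd k B p + p jVx * pd k C p.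
Proof.
  intros Hk HA HB HC; unfold pd.
  rewrite (Derive_ext _ (fun s => A (upd p k s) + p jUx * B (upd p k s) + p jVx * C (upd p k s)))
    by (intro s; rewrite !(upd_neq p k) by jet_index; reflexivity).
  assert (HB' : ex_derive (fun s => p jUx * B (upd p k s)) (p k))
    by exact (ex_derive_scal _ _ _ HB).
  assert (HC' : ex_derive (fun s => p jVx * C (upd p k s)) (p k))
    by exact (ex_derive_scal _ _ _ HC).
  assert (HAB : ex_derive (fun s => A (upd p k s) + p jUx * B (upd p k s)) (p k))
    by exact (ex_derive_plus _ _ _ HA HB').
  rewrite Derive_plus, Derive_plus, !Derive_scal by assumption; reflexivity.
Qed.

Definition Dxx_lift (f : R -> R -> R -> R -> R) (p : jet) : R :=
  lift (dX (dX f)) p + p jUx * lift (dX (dU f)) p + p jVx * lift (dX (dV f)) p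
  + p jUx * (lift (dU (dX f)) p + p jUx * lift (dU (dU f)) p + p jVx * lift (dU (dV f)) p)
  + p jVx * (lift (dV (dX f)) p + p jUx * lift (dV (dU f)) p + p jVx * lift (dV (dV f)) p)
  + p jUxx * lift (dU f) p + p jVxx * lift (dV f) p.

Definition first_order_vars : list nat := jT :: jX :: jU :: jV :: jUt :: jUx :: jVt :: jVx :: nil.

Ltac rewrite_agree H :=
  unfold jT, jX, jU, jV, jUt, jUx, jVt, jVx in *;
  rewrite ?(H 0%nat), ?(H 1%nat), ?(H 2%nat), ?(H 3%nat), ?(H 4%nat), ?(H 5%nat),
    ?(H 6%nat), ?(H 7%nat) by (simpl; tauto).

Lemma lift_depends (f : R -> R -> R -> R -> R) : depends_only_on first_order_vars (lift f).
Proof. intros p q H; unfold lift; rewrite_agree H; reflexivity. Qed.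

Lemma Dx_Dx_lift (f : R -> R -> R -> R -> R) (p : jet) :
  smooth_on 4 dom (lift f) -> dom p -> Dx (Dx (lift f)) p = Dxx_lift f p.
Proof.
  intros Hf Hp.
  set (h := fun q => lift (dX f) q + q jUx * lift (dU f) q + q jVx * lift (dV f) q).
  assert (Hex : forall i k, (i < 4)%nat -> (k < 4)%nat ->
                  ex_derive (fun s => pd i (lift f) (upd p k s)) (p k))
    by (intros i k Hi Hk; apply (Hf (i :: nil) k p); [constructor; auto | exact Hk | exact Hp]).
  assert (Hpd : forall k, (k < 4)%nat -> pd k h p
     = pd k (lift (dX f)) p + p jUx * pd k (lift (dU f)) p + p jVx * pd k (lift (dV f)) p)
    by (intros k Hk; apply pd_first_order_combination; auto;
        [exact (Hex jX k ltac:(jet_index) Hk) | exact (Hex jU k ltac:(jet_index) Hk)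
        | exact (Hex jV k ltac:(jet_index) Hk)]).
  assert (Hh : depends_only_on (jT :: jX :: jU :: jV :: jUx :: jVx :: nil) h)
    by (intros q q' H; unfold h, lift; rewrite_agree H; reflexivity).
  unfold Dx at 1; rewrite !(pd_ext _ (Dx (lift f)) h) by (intro; apply Dx_lift).
  rewrite !Hpd by jet_index.
  rewrite (pd_not_in _ h jUt p Hh), (pd_not_in _ h jVt p Hh) by (simpl; jet_index).
  rewrite (pd_affine jUx h p (lift (dU f) p)), (pd_affine jVx h p (lift (dV f) p))
    by (intro s; unfold h, lift; rewrite upd_eq, !upd_neq by jet_index; ring).
  rewrite !pd_lift_X, !pd_lift_U, !pd_lift_V; unfold Dxx_lift; ring.
Qed.

(** * Coefficient functions on the punctured plane *)

Definition psi_nonzero (u v : R) : Prop := 0 < u ^ 2 + v ^ 2.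

Lemma psi_nonzero_of_u (u v : R) : u <> 0 -> psi_nonzero u v.
Proof. intro Hu; unfold psi_nonzero; assert (0 < u ^ 2) by (apply pow2_gt_0, Hu); nra. Qed.

Lemma psi_nonzero_of_v (u v : R) : v <> 0 -> psi_nonzero u v.
Proof. intro Hv; unfold psi_nonzero; assert (0 < v ^ 2) by (apply pow2_gt_0, Hv); nra. Qed.

Lemma psi_nonzero_1 (v : R) : psi_nonzero 1 v.
Proof. apply psi_nonzero_of_u, R1_neq_R0. Qed.

Lemma psi_nonzero_axis (y : R) : 0 < y -> psi_nonzero y 0.
Proof. intro Hy; apply psi_nonzero_of_u; lra. Qed.

Lemma psi_nonzero_locally_u (u v : R) : psi_nonzero u v -> locally u (fun s => psi_nonzero s v).
Proof. intro Huv; apply locally_pos_of_ex_derive; [auto_derive; auto | exact Huv]. Qed.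

Lemma psi_nonzero_locally_v (u v : R) : psi_nonzero u v -> locally v (fun s => psi_nonzero u s).
Proof. intro Huv; apply locally_pos_of_ex_derive; [auto_derive; auto | exact Huv]. Qed.

Section AffineOnDomain.

Variables (f : R -> R -> R -> R -> R) (al be c : R).
Hypothesis Hf : forall t x u v, psi_nonzero u v -> f t x u v = al * u + be * v + c.

Lemma partials_of_affine (t x u v : R) : psi_nonzero u v ->
  dT f t x u v = 0 /\ dX f t x u v = 0 /\ dU f t x u v = al /\ dV f t x u v = be.
Proof.
  intro Huv; unfold dT, dX, dU, dV; repeat split.
  - rewrite (Derive_ext _ (fun _ => al * u + be * v + c)) by (intro; apply Hf, Huv).
    apply Derive_const.
  - rewrite (Derive_ext _ (fun _ => al * u + be * v + c)) by (intro; apply Hf, Huv).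
    apply Derive_const.
  - rewrite (Derive_ext_loc _ (fun s => al * s + be * v + c)).
    + apply is_derive_unique; auto_derive; auto; ring.
    + eapply filter_imp; [|exact (psi_nonzero_locally_u u v Huv)]; intros s Hs; apply Hf, Hs.
  - rewrite (Derive_ext_loc _ (fun s => al * u + be * s + c)).
    + apply is_derive_unique; auto_derive; auto; ring.
    + eapply filter_imp; [|exact (psi_nonzero_locally_v u v Huv)]; intros s Hs; apply Hf, Hs.
Qed.

End AffineOnDomain.

Lemma Dxx_lift_affine (f : R -> R -> R -> R -> R) (al be c : R) (p : jet) :
  (forall t x u v, psi_nonzero u v -> f t x u v = al * u + be * v + c) -> dom p ->
  Dxx_lift f p = al * p jUxx + be * p jVxx.
Proof.
  intros Hf Hp.
  assert (Hcst : forall (g : R -> R -> R -> R -> R) k,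
            (forall t x u v, psi_nonzero u v -> g t x u v = k) ->
            dX g (p jT) (p jX) (p jU) (p jV) = 0 /\ dU g (p jT) (p jX) (p jU) (p jV) = 0 /\
            dV g (p jT) (p jX) (p jU) (p jV) = 0).
  { intros g k Hg.
    destruct (partials_of_affine g 0 0 k ltac:(intros; rewrite Hg by assumption; ring)
                (p jT) (p jX) _ _ Hp) as (_ & HX & HU & HV).
    auto. }
  pose proof (partials_of_affine f al be c Hf) as Hpart.
  destruct (Hcst (dX f) 0 ltac:(intros; apply Hpart; assumption)) as (HXX & HUX & HVX).
  destruct (Hcst (dU f) al ltac:(intros; apply Hpart; assumption)) as (HXU & HUU & HVU).
  destruct (Hcst (dV f) be ltac:(intros; apply Hpart; assumption)) as (HXV & HUV & HVV).
  destruct (Hpart (p jT) (p jX) _ _ Hp) as (_ & _ & HU & HV).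
  unfold Dxx_lift, lift; rewrite HXX, HUX, HVX, HXU, HUU, HVU, HXV, HUV, HVV, HU, HV; ring.
Qed.

Definition test_jet (t x u v ut vt ux vx : R) : jet :=
  fun j => match j with
  | 0%nat => t | 1%nat => x | 2%nat => u | 3%nat => v
  | 4%nat => ut | 5%nat => ux | 6%nat => vt | 7%nat => vx | _ => 0 end.

Ltac simpl_test_jet :=
  cbv beta iota delta
    [test_jet lift jT jX jU jV jUt jUx jVt jVx jUtt jUtx jUxx jVtt jVtx jVxx] in *.

Section SmoothPartials.

Variable f : R -> R -> R -> R -> R.
Hypothesis Hf : smooth_on 4 dom (lift f).

Let ex_derive_at (k : nat) (t x u v : R) : (k < 4)%nat -> psi_nonzero u v ->
  ex_derive (fun s => lift f (upd (test_jet t x u v 0 0 0 0) k s)) (test_jet t x u v 0 0 0 0 k).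
Proof. intros Hk Huv; exact (Hf nil k _ (Forall_nil _) Hk Huv). Qed.

Lemma is_derive_dT (t x u v : R) : psi_nonzero u v ->
  is_derive (fun s => f s x u v) t (dT f t x u v).
Proof. intro Huv; apply Derive_correct; exact (ex_derive_at jT t x u v ltac:(jet_index) Huv). Qed.

Lemma is_derive_dX (t x u v : R) : psi_nonzero u v ->
  is_derive (fun s => f t s u v) x (dX f t x u v).
Proof. intro Huv; apply Derive_correct; exact (ex_derive_at jX t x u v ltac:(jet_index) Huv). Qed.

Lemma is_derive_dU (t x u v : R) : psi_nonzero u v ->
  is_derive (fun s => f t x s v) u (dU f t x u v).
Proof. intro Huv; apply Derive_correct; exact (ex_derive_at jU t x u v ltac:(jet_index) Huv). Qed.

Lemma is_derive_dV (t x u v : R) : psi_nonzero u v ->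
  is_derive (fun s => f t x u s) v (dV f t x u v).
Proof. intro Huv; apply Derive_correct; exact (ex_derive_at jV t x u v ltac:(jet_index) Huv). Qed.

End SmoothPartials.

Lemma eq0_of_diff (x a b : R) : a = 0 -> b = 0 -> x = a - b -> x = 0.
Proof. intros -> -> ->; ring. Qed.

Lemma is_derive_ext_R (f g : R -> R) (y l : R) :
  (forall s, f s = g s) -> is_derive f y l -> is_derive g y l.
Proof. apply is_derive_ext. Qed.

Lemma is_derive_val (g : R -> R) (y l l' : R) : is_derive g y l -> l = l' -> is_derive g y l'.
Proof. intros H ->; exact H. Qed.

Lemma is_derive_0_const (g : R -> R) (a b : R) :
  (forall y, Rmin a b <= y <= Rmax a b -> is_derive g y 0) -> g a = g b.
Proof.
  intro Hg.
  destruct (MVT_gen g a b (fun _ => 0)) as [c [_ Hc]].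
  - intros y Hy; apply Hg; lra.
  - intros y Hy; apply continuity_pt_filterlim, (ex_derive_continuous g); exists 0; apply Hg, Hy.
  - lra.
Qed.

Lemma punctured_plane_const (f : R -> R -> R) :
  (forall u v, psi_nonzero u v ->
     is_derive (fun s => f s v) u 0 /\ is_derive (fun s => f u s) v 0) ->
  forall u v, psi_nonzero u v -> f u v = f 1 0.
Proof.
  intros Hf u v Huv.
  assert (Hhor : forall v0 a b, v0 <> 0 -> f a v0 = f b v0)
    by (intros v0 a b Hv0; apply (is_derive_0_const (fun s => f s v0)); intros y _;
        apply (Hf y v0 (psi_nonzero_of_v y v0 Hv0))).
  assert (Hver : forall u0 a b, u0 <> 0 -> f u0 a = f u0 b)
    by (intros u0 a b Hu0; apply (is_derive_0_const (fun s => f u0 s)); intros y _;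
        apply (Hf u0 y (psi_nonzero_of_u u0 y Hu0))).
  destruct (Req_dec v 0) as [->|Hv].
  - assert (Hu : u <> 0) by (intros ->; unfold psi_nonzero in Huv; lra).
    rewrite (Hver u 0 1 Hu), (Hhor 1 u 1 R1_neq_R0); apply Hver; lra.
  - rewrite (Hhor v u 1 Hv); apply Hver; lra.
Qed.

Lemma exp_mul_affine_const (c F T D : R) :
  c <> 0 -> (forall k, exp (c * k) * (F + T * k) = D) -> F = 0 /\ T = 0.
Proof.
  intros Hc Hk.
  pose proof (Hk 0) as H0; pose proof (Hk 1) as H1; pose proof (Hk 2) as H2.
  rewrite Rmult_0_r, exp_0 in H0; rewrite Rmult_1_r in H1.
  replace (c * 2) with (c + c) in H2 by ring; rewrite exp_plus in H2.
  set (q := exp c) in *.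
  assert (Hq : 0 < q) by apply exp_pos.
  assert (Hq1 : q <> 1)
    by (intro E; apply Hc; rewrite <- (ln_exp c); fold q; rewrite E; apply ln_1).
  assert (HF : F * (q - 1) ^ 2 = 0).
  { replace (F * (q - 1) ^ 2) with ((F - q * q * F) - 2 * q * (F - q * F)) by ring.
    replace (F - q * q * F) with (2 * q * q * T) by lra.
    replace (F - q * F) with (q * T) by lra; ring. }
  apply Rmult_integral in HF; destruct HF as [HF|HF].
  - split; [exact HF|]; rewrite HF in H1; apply (Rmult_eq_reg_l q); lra.
  - exfalso; apply (pow_nonzero (q - 1) 2); [lra | exact HF].
Qed.

Ltac polar_derive :=
  let Huv := fresh in let Hf := fresh in let Hg := fresh in
  let Ef := fresh in let Eg := fresh in
  intros Huv Hf Hg Ef Eg; unfold psi_nonzero in Huv;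
  match type of Hf with is_derive ?f ?y ?df =>
  match type of Hg with is_derive ?g _ ?dg =>
  match type of Ef with ?r * _ = _ =>
    let Df := fresh in let Dg := fresh in
    assert (Df : Derive (fun s => f s) y = df) by (apply is_derive_unique, Hf);
    assert (Dg : Derive (fun s => g s) y = dg) by (apply is_derive_unique, Hg);
    apply (Rmult_eq_compat_r (/ r)) in Ef, Eg;
    replace (r * df * / r) with df in Ef by (field; lra);
    replace (r * dg * / r) with dg in Eg by (field; lra);
    split; auto_derive;
    [ repeat split; try (eexists; eassumption); lra
    | rewrite Df, Dg, Ef, Eg; field; lra
    | repeat split; try (eexists; eassumption); lra
    | rewrite Df, Dg, Ef, Eg; field; lra ]
  end end end.

Lemma polar_parts_derive_u (f g : R -> R) (u v df dg T : R) :
  psi_nonzero u v -> is_derive f u df -> is_derive g u dg ->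
  (u ^ 2 + v ^ 2) * df = u * f u + v * g u + (u ^ 2 + v ^ 2) * T ->
  (u ^ 2 + v ^ 2) * dg = u * g u - v * f u ->
  is_derive (fun s => (s * f s + v * g s) / (s ^ 2 + v ^ 2) - T * ln (s ^ 2 + v ^ 2) / 2) u 0 /\
  is_derive (fun s => (s * g s - v * f s) / (s ^ 2 + v ^ 2)) u (- v * T / (u ^ 2 + v ^ 2)).
Proof. polar_derive. Qed.

Lemma polar_parts_derive_v (f g : R -> R) (u v df dg T : R) :
  psi_nonzero u v -> is_derive f v df -> is_derive g v dg ->
  (u ^ 2 + v ^ 2) * df = v * f v - u * g v ->
  (u ^ 2 + v ^ 2) * dg = u * f v + v * g v + (u ^ 2 + v ^ 2) * T ->
  is_derive (fun s => (u * f s + s * g s) / (u ^ 2 + s ^ 2) - T * ln (u ^ 2 + s ^ 2) / 2) v 0 /\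
  is_derive (fun s => (u * g s - s * f s) / (u ^ 2 + s ^ 2)) v (u * T / (u ^ 2 + v ^ 2)).
Proof. polar_derive. Qed.

(** * Prolongation and linearized equations *)

Section Prolongation.

Variable Q : vfield.

Definition jtau : jet -> R := lift (vf_tau Q).
Definition jxi : jet -> R := lift (vf_xi Q).
Definition jphi : jet -> R := lift (vf_phi Q).
Definition jchi : jet -> R := lift (vf_chi Q).

Definition prol_u_t (q : jet) : R := Dt jphi q - q jUt * Dt jtau q - q jUx * Dt jxi q.
Definition prol_u_x (q : jet) : R := Dx jphi q - q jUt * Dx jtau q - q jUx * Dx jxi q.
Definition prol_v_t (q : jet) : R := Dt jchi q - q jVt * Dt jtau q - q jVx * Dt jxi q.
Definition prol_v_x (q : jet) : R := Dx jchi q - q jVt * Dx jtau q - q jVx * Dx jxi q.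
Definition prol_u_xx (p : jet) : R := Dx prol_u_x p - p jUtx * Dx jtau p - p jUxx * Dx jxi p.
Definition prol_v_xx (p : jet) : R := Dx prol_v_x p - p jVtx * Dx jtau p - p jVxx * Dx jxi p.

Definition evolution_vars : list nat := jX :: jU :: jV :: jUt :: jVt :: jUxx :: jVxx :: nil.

Lemma pr2_evolution (g : jet -> R) (p : jet) :
  depends_only_on evolution_vars g ->
  pr2 Q g p = jxi p * pd jX g p + jphi p * pd jU g p + jchi p * pd jV g p
    + prol_u_t p * pd jUt g p + prol_v_t p * pd jVt g p
    + prol_u_xx p * pd jUxx g p + prol_v_xx p * pd jVxx g p.
Proof.
  intro Hg; unfold pr2; cbv zeta.
  assert (Hnot : forall k, ~ In k evolution_vars -> pd k g p = 0)
    by (intros k Hk; exact (pd_not_in _ _ k p Hg Hk)).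
  rewrite (Hnot jT), (Hnot jUx), (Hnot jVx), (Hnot jUtt), (Hnot jUtx), (Hnot jVtt), (Hnot jVtx)
    by (unfold evolution_vars; simpl; jet_index).
  unfold prol_u_t, prol_v_t, prol_u_xx, prol_v_xx, prol_u_x, prol_v_x, jtau, jxi, jphi, jchi.
  ring.
Qed.

Lemma prol_u_x_depends : depends_only_on first_order_vars prol_u_x.
Proof.
  intros p q H; unfold prol_u_x, jtau, jxi, jphi; rewrite !Dx_lift.
  unfold lift; rewrite_agree H; reflexivity.
Qed.

Lemma prol_v_t_depends : depends_only_on first_order_vars prol_v_t.
Proof.
  intros p q H; unfold prol_v_t, jtau, jxi, jchi; rewrite !Dt_lift.
  unfold lift; rewrite_agree H; reflexivity.
Qed.

Lemma Dx_upd_utx (g : jet -> R) (p : jet) (s : R) :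
  depends_only_on first_order_vars g ->
  Dx g (upd p jUtx s) = Dx g p + (s - p jUtx) * pd jUt g p.
Proof.
  intro Hg.
  assert (Hpd : forall k, k <> jUtx -> pd k g (upd p jUtx s) = pd k g p).
  { intros k Hk; apply (pd_depends_only_on first_order_vars); auto.
    - intros j Hj; apply upd_neq; unfold first_order_vars in Hj; simpl in Hj; jet_index.
    - apply upd_neq, Hk. }
  unfold Dx; rewrite !Hpd by jet_index; rewrite upd_eq, !upd_neq by jet_index; ring.
Qed.

Lemma pd_Ut_prol_u_x (p : jet) : pd jUt prol_u_x p = - Dx jtau p.
Proof.
  apply pd_affine; intro s; unfold prol_u_x, jtau, jxi, jphi; rewrite !Dx_lift.
  unfold lift; rewrite upd_eq, !upd_neq by jet_index; ring.
Qed.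

Lemma prol_u_xx_upd_utx (p : jet) (s : R) :
  prol_u_xx (upd p jUtx s) = prol_u_xx p - 2 * (s - p jUtx) * Dx jtau p.
Proof.
  unfold prol_u_xx.
  rewrite !Dx_upd_utx by (apply prol_u_x_depends || apply lift_depends).
  rewrite pd_Ut_prol_u_x; unfold jtau, jxi; rewrite !(pd_eq0 jUt (lift _)) by reflexivity.
  rewrite upd_eq, upd_neq by jet_index; ring.
Qed.

End Prolongation.

Section Linearization.

Variables (gamma : R) (a b : R -> R).

Definition rho_u (p : jet) : R := gamma * p jU * rho gamma p / (p jU ^ 2 + p jV ^ 2).
Definition rho_v (p : jet) : R := gamma * p jV * rho gamma p / (p jU ^ 2 + p jV ^ 2).

Lemma NLS_re_depends : depends_only_on (jX :: jU :: jV :: jVt :: jUxx :: nil) (NLS_re gamma a b).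
Proof.
  intros p q H; unfold NLS_re, rho.
  rewrite !(H jX), !(H jU), !(H jV), !(H jVt), !(H jUxx) by (simpl; tauto); reflexivity.
Qed.

Lemma NLS_im_depends : depends_only_on (jX :: jU :: jV :: jUt :: jVxx :: nil) (NLS_im gamma a b).
Proof.
  intros p q H; unfold NLS_im, rho.
  rewrite !(H jX), !(H jU), !(H jV), !(H jUt), !(H jVxx) by (simpl; tauto); reflexivity.
Qed.

Ltac pd_linear := apply pd_affine; intro s; unfold NLS_re, NLS_im, rho;
  rewrite ?upd_eq, ?upd_neq by jet_index; ring.

Ltac pd_nonlinear :=
  let Hp := fresh in
  intro Hp; unfold dom in Hp; unfold pd, rho_u, rho_v;
  cbv beta iota delta [NLS_re NLS_im rho Rpower upd Nat.eqb jX jU jV jUt jVt jUxx jVxx] in *;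
  apply is_derive_unique; auto_derive; [lra | cbn [pow]; field; lra].

Lemma pd_NLS_re_Vt (p : jet) : pd jVt (NLS_re gamma a b) p = -1.
Proof. pd_linear. Qed.

Lemma pd_NLS_re_Uxx (p : jet) : pd jUxx (NLS_re gamma a b) p = 1.
Proof. pd_linear. Qed.

Lemma pd_NLS_im_Ut (p : jet) : pd jUt (NLS_im gamma a b) p = 1.
Proof. pd_linear. Qed.

Lemma pd_NLS_im_Vxx (p : jet) : pd jVxx (NLS_im gamma a b) p = 1.
Proof. pd_linear. Qed.

Lemma pd_NLS_re_U (p : jet) : dom p ->
  pd jU (NLS_re gamma a b) p = rho_u p * p jU + rho gamma p + a (p jX).
Proof. pd_nonlinear. Qed.

Lemma pd_NLS_re_V (p : jet) : dom p ->
  pd jV (NLS_re gamma a b) p = rho_v p * p jU - b (p jX).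
Proof. pd_nonlinear. Qed.

Lemma pd_NLS_im_U (p : jet) : dom p ->
  pd jU (NLS_im gamma a b) p = rho_u p * p jV + b (p jX).
Proof. pd_nonlinear. Qed.

Lemma pd_NLS_im_V (p : jet) : dom p ->
  pd jV (NLS_im gamma a b) p = rho_v p * p jV + rho gamma p + a (p jX).
Proof. pd_nonlinear. Qed.

Lemma pr2_NLS_re (Q : vfield) (p : jet) : dom p ->
  pr2 Q (NLS_re gamma a b) p =
    jxi Q p * pd jX (NLS_re gamma a b) p
    + jphi Q p * (rho_u p * p jU + rho gamma p + a (p jX))
    + jchi Q p * (rho_v p * p jU - b (p jX)) - prol_v_t Q p + prol_u_xx Q p.
Proof.
  intro Hp.
  rewrite pr2_evolution
    by (eapply depends_only_on_incl; [|apply NLS_re_depends];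
        intros j Hj; unfold evolution_vars; simpl in *; tauto).
  rewrite (pd_not_in _ _ jUt _ NLS_re_depends), (pd_not_in _ _ jVxx _ NLS_re_depends)
    by (simpl; jet_index).
  rewrite pd_NLS_re_U, pd_NLS_re_V, pd_NLS_re_Vt, pd_NLS_re_Uxx by exact Hp; ring.
Qed.

Lemma pr2_NLS_im (Q : vfield) (p : jet) : dom p ->
  pr2 Q (NLS_im gamma a b) p =
    jxi Q p * pd jX (NLS_im gamma a b) p
    + jphi Q p * (rho_u p * p jV + b (p jX))
    + jchi Q p * (rho_v p * p jV + rho gamma p + a (p jX)) + prol_u_t Q p + prol_v_xx Q p.
Proof.
  intro Hp.
  rewrite pr2_evolution
    by (eapply depends_only_on_incl; [|apply NLS_im_depends];
        intros j Hj; unfold evolution_vars; simpl in *; tauto).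
  rewrite (pd_not_in _ _ jVt _ NLS_im_depends), (pd_not_in _ _ jUxx _ NLS_im_depends)
    by (simpl; jet_index).
  rewrite pd_NLS_im_U, pd_NLS_im_V, pd_NLS_im_Ut, pd_NLS_im_Vxx by exact Hp; ring.
Qed.

Lemma pr2_NLS_re_upd_utx (Q : vfield) (p : jet) (s : R) :
  dom p ->
  pr2 Q (NLS_re gamma a b) (upd p jUtx s)
  = pr2 Q (NLS_re gamma a b) p - 2 * (s - p jUtx) * Dx (jtau Q) p.
Proof.
  intro Hp.
  assert (Hp' : dom (upd p jUtx s)) by (unfold dom; rewrite !upd_neq by jet_index; exact Hp).
  rewrite !pr2_NLS_re, prol_u_xx_upd_utx by assumption.
  rewrite (prol_v_t_depends Q (upd p jUtx s) p)
    by (apply agree_on_upd_not_in; unfold first_order_vars; simpl; jet_index).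
  rewrite (pd_depends_only_on _ _ jX (upd p jUtx s) p NLS_re_depends)
    by first [apply agree_on_upd_not_in; simpl; jet_index | apply upd_neq; jet_index].
  unfold jxi, jphi, jchi, lift, rho_u, rho_v, rho; rewrite !upd_neq by jet_index; ring.
Qed.

End Linearization.

Section Reduced.

Variable Q : vfield.
Hypothesis HQ : smooth_vfield Q.
Hypothesis Hxi : forall t x u v, psi_nonzero u v -> vf_xi Q t x u v = 0.
Hypothesis Htau : forall t x u v, psi_nonzero u v ->
  dX (vf_tau Q) t x u v = 0 /\ dU (vf_tau Q) t x u v = 0 /\ dV (vf_tau Q) t x u v = 0.

Lemma Dt_jtau_reduced (q : jet) : dom q -> Dt (jtau Q) q = lift (dT (vf_tau Q)) q.
Proof.
  intro Hq; destruct (Htau (q jT) (q jX) _ _ Hq) as (_ & HU & HV).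
  unfold jtau; rewrite Dt_lift; unfold lift; rewrite HU, HV; ring.
Qed.

Lemma Dx_jtau_reduced (q : jet) : dom q -> Dx (jtau Q) q = 0.
Proof.
  intro Hq; destruct (Htau (q jT) (q jX) _ _ Hq) as (HX & HU & HV).
  unfold jtau; rewrite Dx_lift; unfold lift; rewrite HX, HU, HV; ring.
Qed.

Lemma jxi_derivatives_reduced (q : jet) : dom q -> Dt (jxi Q) q = 0 /\ Dx (jxi Q) q = 0.
Proof.
  intro Hq.
  destruct (partials_of_affine (vf_xi Q) 0 0 0 ltac:(intros; rewrite Hxi by assumption; ring)
              (q jT) (q jX) _ _ Hq) as (HT & HX & HU & HV).
  unfold jxi; rewrite Dt_lift, Dx_lift; unfold lift; rewrite HT, HX, HU, HV; split; ring.
Qed.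

Lemma prol_u_t_reduced (q : jet) : dom q ->
  prol_u_t Q q = Dt (jphi Q) q - q jUt * lift (dT (vf_tau Q)) q.
Proof.
  intro Hq; unfold prol_u_t.
  rewrite Dt_jtau_reduced, (proj1 (jxi_derivatives_reduced q Hq)) by exact Hq; ring.
Qed.

Lemma prol_v_t_reduced (q : jet) : dom q ->
  prol_v_t Q q = Dt (jchi Q) q - q jVt * lift (dT (vf_tau Q)) q.
Proof.
  intro Hq; unfold prol_v_t.
  rewrite Dt_jtau_reduced, (proj1 (jxi_derivatives_reduced q Hq)) by exact Hq; ring.
Qed.

Lemma prol_u_x_reduced (q : jet) : dom q -> prol_u_x Q q = Dx (jphi Q) q.
Proof.
  intro Hq; unfold prol_u_x.
  rewrite Dx_jtau_reduced, (proj2 (jxi_derivatives_reduced q Hq)) by exact Hq; ring.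
Qed.

Lemma prol_u_xx_reduced (p : jet) : dom p -> prol_u_xx Q p = Dxx_lift (vf_phi Q) p.
Proof.
  intro Hp; destruct HQ as (_ & _ & Hphi & _).
  unfold prol_u_xx; rewrite Dx_jtau_reduced, (proj2 (jxi_derivatives_reduced p Hp)) by exact Hp.
  rewrite (Dx_ext_dom _ _ p prol_u_x_reduced Hp).
  unfold jphi; rewrite Dx_Dx_lift by assumption; ring.
Qed.

Lemma prol_v_x_reduced (q : jet) : dom q -> prol_v_x Q q = Dx (jchi Q) q.
Proof.
  intro Hq; unfold prol_v_x.
  rewrite Dx_jtau_reduced, (proj2 (jxi_derivatives_reduced q Hq)) by exact Hq; ring.
Qed.

Lemma prol_v_xx_reduced (p : jet) : dom p -> prol_v_xx Q p = Dxx_lift (vf_chi Q) p.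
Proof.
  intro Hp; destruct HQ as (_ & _ & _ & Hchi).
  unfold prol_v_xx; rewrite Dx_jtau_reduced, (proj2 (jxi_derivatives_reduced p Hp)) by exact Hp.
  rewrite (Dx_ext_dom _ _ p prol_v_x_reduced Hp).
  unfold jchi; rewrite Dx_Dx_lift by assumption; ring.
Qed.


Variables (gamma : R) (a b : R -> R).

Lemma pr2_NLS_re_reduced (p : jet) : dom p ->
  pr2 Q (NLS_re gamma a b) p =
    jphi Q p * (rho_u gamma p * p jU + rho gamma p + a (p jX))
    + jchi Q p * (rho_v gamma p * p jU - b (p jX))
    - (Dt (jchi Q) p - p jVt * lift (dT (vf_tau Q)) p) + Dxx_lift (vf_phi Q) p.
Proof.
  intro Hp; rewrite pr2_NLS_re, prol_v_t_reduced, prol_u_xx_reduced by exact Hp.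
  unfold jxi, lift; rewrite Hxi by exact Hp; ring.
Qed.

Lemma pr2_NLS_im_reduced (p : jet) : dom p ->
  pr2 Q (NLS_im gamma a b) p =
    jphi Q p * (rho_u gamma p * p jV + b (p jX))
    + jchi Q p * (rho_v gamma p * p jV + rho gamma p + a (p jX))
    + (Dt (jphi Q) p - p jUt * lift (dT (vf_tau Q)) p) + Dxx_lift (vf_chi Q) p.
Proof.
  intro Hp; rewrite pr2_NLS_im, prol_u_t_reduced, prol_v_xx_reduced by exact Hp.
  unfold jxi, lift; rewrite Hxi by exact Hp; ring.
Qed.

End Reduced.

(** * Symmetries common to all stationary potentials *)

Definition affine (al be : R) : R -> R := fun y => al * y + be.

Lemma smooth1_affine (al be : R) : smooth1 (affine al be).
Proof.
  assert (Hn : forall n, (forall y, Derive_n (affine al be) n y = affine al be y)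
                         \/ exists c, forall y, Derive_n (affine al be) n y = c).
  { induction n as [|n [IH|[c IH]]]; simpl.
    - left; reflexivity.
    - right; exists al; intro y; rewrite (Derive_ext _ _ _ IH).
      unfold affine; apply is_derive_unique; auto_derive; auto; ring.
    - right; exists 0; intro y; rewrite (Derive_ext _ _ _ IH); apply Derive_const. }
  intros n y; destruct (Hn n) as [E|[c E]].
  - apply (ex_derive_ext (affine al be)); [intro; symmetry; apply E|].
    unfold affine; auto_derive; auto.
  - apply (ex_derive_ext (fun _ => c)); [intro; symmetry; apply E|]; auto_derive; auto.
Qed.

Lemma pd_NLS_re_X_affine (gamma al be al' be' : R) (p : jet) :
  pd jX (NLS_re gamma (affine al be) (affine al' be')) p = al * p jU - al' * p jV.
Proof.
  apply pd_affine; intro s; unfold NLS_re, rho, affine.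
  rewrite upd_eq, !upd_neq by jet_index; ring.
Qed.

Lemma pd_NLS_im_X_affine (gamma al be al' be' : R) (p : jet) :
  pd jX (NLS_im gamma (affine al be) (affine al' be')) p = al * p jV + al' * p jU.
Proof.
  apply pd_affine; intro s; unfold NLS_im, rho, affine.
  rewrite upd_eq, !upd_neq by jet_index; ring.
Qed.

Definition common_symmetry (gamma : R) (Q : vfield) : Prop :=
  forall a b : R -> R, smooth1 a -> smooth1 b -> is_lie_symmetry gamma a b Q.

Definition abs_pow (gamma u v : R) : R := Rpower (u ^ 2 + v ^ 2) (gamma / 2).

Lemma abs_pow_exp (gamma k : R) : abs_pow gamma (exp k) 0 = exp (gamma * k).
Proof.
  unfold abs_pow, Rpower.
  replace (exp k ^ 2 + 0 ^ 2) with (exp (k + k)) by (rewrite exp_plus; ring).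
  rewrite ln_exp; f_equal; field.
Qed.

Ltac expand_at_test_jet :=
  unfold jphi, jchi, Dxx_lift, rho_u, rho_v, rho, affine in *; rewrite ?Dt_lift in *;
  simpl_test_jet; unfold lift in *.

Section CommonSymmetry.

Variables (gamma : R) (Q : vfield).
Hypothesis Hgamma : gamma <> 0.
Hypothesis HS : common_symmetry gamma Q.
Hypothesis HQ : smooth_vfield Q.

Lemma symmetry_at_solution (al be al' be' : R) (p : jet) :
  dom p ->
  NLS_re gamma (affine al be) (affine al' be') p = 0 ->
  NLS_im gamma (affine al be) (affine al' be') p = 0 ->
  pr2 Q (NLS_re gamma (affine al be) (affine al' be')) p = 0 /\
  pr2 Q (NLS_im gamma (affine al be) (affine al' be')) p = 0.
Proof. apply HS; apply smooth1_affine. Qed.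

Lemma symmetry_at_test_jet (al be al' be' t x u v ut vt ux vx : R) :
  psi_nonzero u v ->
  vt = (abs_pow gamma u v + affine al be x) * u - affine al' be' x * v ->
  ut = - ((abs_pow gamma u v + affine al be x) * v + affine al' be' x * u) ->
  pr2 Q (NLS_re gamma (affine al be) (affine al' be')) (test_jet t x u v ut vt ux vx) = 0 /\
  pr2 Q (NLS_im gamma (affine al be) (affine al' be')) (test_jet t x u v ut vt ux vx) = 0.
Proof.
  intros Huv Hvt Hut; apply symmetry_at_solution;
    unfold dom, NLS_re, NLS_im, rho; simpl_test_jet; fold (abs_pow gamma u v);
    [exact Huv | rewrite Hvt; ring | rewrite Hut; ring].
Qed.

Lemma xi_vanishes (t x u v : R) : psi_nonzero u v -> vf_xi Q t x u v = 0.
Proof.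
  intro Huv; set (Rho := abs_pow gamma u v).
  (* [a = y - x] vanishes at [x]; only its slope, which multiplies [xi], tells it from [0]. *)
  pose proof (symmetry_at_test_jet 1 (- x) 0 0 t x u v (- (Rho * v)) (Rho * u) 0 0 Huv
    ltac:(unfold Rho, affine; ring) ltac:(unfold Rho, affine; ring)) as [Hre1 Him1].
  pose proof (symmetry_at_test_jet 0 0 0 0 t x u v (- (Rho * v)) (Rho * u) 0 0 Huv
    ltac:(unfold Rho, affine; ring) ltac:(unfold Rho, affine; ring)) as [Hre0 Him0].
  assert (Hd : dom (test_jet t x u v (- (Rho * v)) (Rho * u) 0 0)) by exact Huv.
  rewrite pr2_NLS_re, pd_NLS_re_X_affine in Hre1, Hre0 by exact Hd.
  rewrite pr2_NLS_im, pd_NLS_im_X_affine in Him1, Him0 by exact Hd.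
  unfold jxi, affine in *; simpl_test_jet.
  assert (Hxu : vf_xi Q t x u v * u = 0) by (apply (eq0_of_diff _ _ _ Hre1 Hre0); ring).
  assert (Hxv : vf_xi Q t x u v * v = 0) by (apply (eq0_of_diff _ _ _ Him1 Him0); ring).
  apply (Rmult_eq_reg_r (u ^ 2 + v ^ 2)); [|unfold psi_nonzero in Huv; lra].
  transitivity (vf_xi Q t x u v * u * u + vf_xi Q t x u v * v * v); [ring|].
  rewrite Hxu, Hxv; ring.
Qed.

Lemma Dx_tau_vanishes (t x u v ux vx : R) : psi_nonzero u v ->
  Dx (jtau Q) (test_jet t x u v (- (abs_pow gamma u v * v)) (abs_pow gamma u v * u) ux vx) = 0.
Proof.
  intro Huv; set (p := test_jet t x u v _ _ ux vx).
  assert (Hp : dom p) by exact Huv.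
  pose proof (symmetry_at_test_jet 0 0 0 0 t x u v (- (abs_pow gamma u v * v))
    (abs_pow gamma u v * u) ux vx Huv ltac:(unfold affine; ring) ltac:(unfold affine; ring))
    as [Hre _]; fold p in Hre.
  (* The equation does not involve [u_tx], whose coefficient in [pr2 Q] is [-2 D_x tau]. *)
  assert (Hre' : pr2 Q (NLS_re gamma (affine 0 0) (affine 0 0)) (upd p jUtx 1) = 0).
  { apply symmetry_at_solution;
      [unfold dom; rewrite !upd_neq by jet_index; exact Hp
      | rewrite (NLS_re_depends _ _ _ (upd p jUtx 1) p)
      | rewrite (NLS_im_depends _ _ _ (upd p jUtx 1) p)];
      try (apply agree_on_upd_not_in; simpl; jet_index);
      unfold p, NLS_re, NLS_im, rho, affine, abs_pow; simpl_test_jet; ring. }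
  rewrite pr2_NLS_re_upd_utx, Hre in Hre' by exact Hp.
  change (p jUtx) with 0 in Hre'; lra.
Qed.

Lemma tau_partials_vanish (t x u v : R) : psi_nonzero u v ->
  dX (vf_tau Q) t x u v = 0 /\ dU (vf_tau Q) t x u v = 0 /\ dV (vf_tau Q) t x u v = 0.
Proof.
  intro Huv.
  pose proof (Dx_tau_vanishes t x u v 0 0 Huv) as H00.
  pose proof (Dx_tau_vanishes t x u v 1 0 Huv) as H10.
  pose proof (Dx_tau_vanishes t x u v 0 1 Huv) as H01.
  unfold jtau in *; rewrite Dx_lift in H00, H10, H01; simpl_test_jet; lra.
Qed.

Lemma determining_equations (t x u v : R) : psi_nonzero u v ->
  let phi := vf_phi Q t x u v in let chi := vf_chi Q t x u v in
  let r := u ^ 2 + v ^ 2 in let T := dT (vf_tau Q) t x u v in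
  r * dU (vf_phi Q) t x u v = u * phi + v * chi + r * T /\
  r * dU (vf_chi Q) t x u v = u * chi - v * phi /\
  r * dV (vf_phi Q) t x u v = v * phi - u * chi /\
  r * dV (vf_chi Q) t x u v = u * phi + v * chi + r * T.
Proof.
  intros Huv phi chi r T; set (Rho := abs_pow gamma u v).
  pose proof (symmetry_at_test_jet 0 0 0 0 t x u v (- (Rho * v)) (Rho * u) 0 0 Huv
    ltac:(unfold Rho, affine; ring) ltac:(unfold Rho, affine; ring)) as [Hre0 Him0].
  (* The constant potentials [a = u, b = -v] and [a = v, b = u] keep the point a solution
     after shifting [v_t] by [r], resp. [u_t] by [-r]. *)
  pose proof (symmetry_at_test_jet 0 u 0 (- v) t x u v (- (Rho * v)) (Rho * u + r) 0 0
    Huv ltac:(unfold Rho, r, affine; ring) ltac:(unfold Rho, affine; ring)) as [Hre1 Him1].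
  pose proof (symmetry_at_test_jet 0 v 0 u t x u v (- (Rho * v) - r) (Rho * u) 0 0
    Huv ltac:(unfold Rho, affine; ring) ltac:(unfold Rho, r, affine; ring)) as [Hre2 Him2].
  rewrite (pr2_NLS_re_reduced Q HQ xi_vanishes tau_partials_vanish) in Hre0, Hre1, Hre2
    by exact Huv.
  rewrite (pr2_NLS_im_reduced Q HQ xi_vanishes tau_partials_vanish) in Him0, Him1, Him2
    by exact Huv.
  expand_at_test_jet.
  assert (E1 : u * phi + v * chi - r * (dV (vf_chi Q) t x u v - T) = 0)
    by (apply (eq0_of_diff _ _ _ Hre1 Hre0); unfold phi, chi, r, T; ring).
  assert (E2 : u * chi - v * phi + r * dV (vf_phi Q) t x u v = 0)
    by (apply (eq0_of_diff _ _ _ Him1 Him0); unfold phi, chi, r, T; ring).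
  assert (E3 : v * phi - u * chi + r * dU (vf_chi Q) t x u v = 0)
    by (apply (eq0_of_diff _ _ _ Hre2 Hre0); unfold phi, chi, r, T; ring).
  assert (E4 : u * phi + v * chi - r * (dU (vf_phi Q) t x u v - T) = 0)
    by (apply (eq0_of_diff _ _ _ Him2 Him0); unfold phi, chi, r, T; ring).
  repeat split; lra.
Qed.

Lemma tau_depends_on_t (t x u v : R) : psi_nonzero u v -> vf_tau Q t x u v = vf_tau Q t 0 1 0.
Proof.
  intro Huv; pose proof HQ as (Htau & _).
  assert (Hplane : forall u' v', psi_nonzero u' v' ->
            is_derive (fun s => vf_tau Q t x s v') u' 0 /\
            is_derive (fun s => vf_tau Q t x u' s) v' 0).
  { intros u' v' Huv'; destruct (tau_partials_vanish t x u' v' Huv') as (_ & HU & HV).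
    split; [eapply is_derive_val; [apply is_derive_dU|exact HU]
           | eapply is_derive_val; [apply is_derive_dV|exact HV]]; assumption. }
  rewrite (punctured_plane_const _ Hplane u v Huv).
  apply (is_derive_0_const (fun s => vf_tau Q t s 1 0)); intros y _.
  eapply is_derive_val; [apply is_derive_dX; [exact Htau | apply psi_nonzero_1]|].
  exact (proj1 (tau_partials_vanish t y 1 0 (psi_nonzero_1 0))).
Qed.

Lemma dT_tau_depends_on_t (t x u v : R) : psi_nonzero u v ->
  dT (vf_tau Q) t x u v = dT (vf_tau Q) t 0 1 0.
Proof. intro Huv; unfold dT; apply Derive_ext; intro s; apply tau_depends_on_t, Huv. Qed.

(* Real and imaginary parts of [eta / psi], with [eta = phi + i chi] and [psi = u + i v]. *)
Definition eta_re (t x u v : R) : R :=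
  (u * vf_phi Q t x u v + v * vf_chi Q t x u v) / (u ^ 2 + v ^ 2).
Definition eta_im (t x u v : R) : R :=
  (u * vf_chi Q t x u v - v * vf_phi Q t x u v) / (u ^ 2 + v ^ 2).

(* The real part of [eta/psi - T log psi] is locally constant and [eta_im] has the gradient
   of [T arg psi]. As [arg] has no continuous branch on the punctured plane, [T = 0] is
   first obtained on the positive axis. *)
Lemma eta_derivatives (t x u v : R) : psi_nonzero u v ->
  let T := dT (vf_tau Q) t 0 1 0 in
  (is_derive (fun s => eta_re t x s v - T * ln (s ^ 2 + v ^ 2) / 2) u 0 /\
   is_derive (fun s => eta_im t x s v) u (- v * T / (u ^ 2 + v ^ 2))) /\
  (is_derive (fun s => eta_re t x u s - T * ln (u ^ 2 + s ^ 2) / 2) v 0 /\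
   is_derive (fun s => eta_im t x u s) v (u * T / (u ^ 2 + v ^ 2))).
Proof.
  intros Huv T; pose proof HQ as (_ & _ & Hphi & Hchi).
  destruct (determining_equations t x u v Huv) as (E1 & E2 & E3 & E4).
  rewrite dT_tau_depends_on_t in E1, E4 by exact Huv; fold T in E1, E4.
  split.
  - apply (polar_parts_derive_u _ _ u v (dU (vf_phi Q) t x u v) (dU (vf_chi Q) t x u v));
      try apply is_derive_dU; assumption.
  - apply (polar_parts_derive_v _ _ u v (dV (vf_phi Q) t x u v) (dV (vf_chi Q) t x u v));
      try apply is_derive_dV; assumption.
Qed.

Lemma axis_forms (t x y : R) : 0 < y ->
  vf_phi Q t x y 0 = y * (vf_phi Q t x 1 0 + dT (vf_tau Q) t 0 1 0 * ln y) /\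
  vf_chi Q t x y 0 = y * vf_chi Q t x 1 0.
Proof.
  intro Hy; set (T := dT (vf_tau Q) t 0 1 0).
  assert (Hseg : forall s, Rmin y 1 <= s <= Rmax y 1 -> psi_nonzero s 0)
    by (intros s Hs; apply psi_nonzero_axis; unfold Rmin, Rmax in Hs;
        destruct (Rle_dec y 1); lra).
  assert (Hre : eta_re t x y 0 - T * ln (y ^ 2 + 0 ^ 2) / 2
                = eta_re t x 1 0 - T * ln (1 ^ 2 + 0 ^ 2) / 2)
    by (apply (is_derive_0_const (fun s => eta_re t x s 0 - T * ln (s ^ 2 + 0 ^ 2) / 2));
        intros s Hs; exact (proj1 (proj1 (eta_derivatives t x s 0 (Hseg s Hs))))).
  assert (Him : eta_im t x y 0 = eta_im t x 1 0)
    by (apply (is_derive_0_const (fun s => eta_im t x s 0)); intros s Hs;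
        eapply is_derive_val; [exact (proj2 (proj1 (eta_derivatives t x s 0 (Hseg s Hs))))|];
        unfold Rdiv; ring).
  unfold eta_re, eta_im in Hre, Him.
  replace (y ^ 2 + 0 ^ 2) with (y * y) in Hre by ring; replace (1 ^ 2 + 0 ^ 2) with 1 in * by ring.
  rewrite ln_mult, ln_1 in Hre by lra.
  split.
  - replace (vf_phi Q t x y 0) with
      (y * ((y * vf_phi Q t x y 0 + 0 * vf_chi Q t x y 0) / (y * y) - T * (ln y + ln y) / 2
            + T * ln y)) by (field; lra).
    rewrite Hre; field.
  - replace (vf_chi Q t x y 0) with
      (y * ((y * vf_chi Q t x y 0 - 0 * vf_phi Q t x y 0) / (y ^ 2 + 0 ^ 2))) by (field; lra).
    rewrite Him; field.
Qed.

Lemma axis_equation (t x y : R) : 0 < y ->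
  gamma * abs_pow gamma y 0 * vf_phi Q t x y 0 - dT (vf_chi Q) t x y 0
  + dX (dX (vf_phi Q)) t x y 0 = 0.
Proof.
  intro Hy; set (Rho := abs_pow gamma y 0).
  pose proof (symmetry_at_test_jet 0 0 0 0 t x y 0 (- (Rho * 0)) (Rho * y) 0 0
    (psi_nonzero_axis y Hy) ltac:(unfold Rho, affine; ring) ltac:(unfold Rho, affine; ring))
    as [Hre _].
  rewrite (pr2_NLS_re_reduced Q HQ xi_vanishes tau_partials_vanish) in Hre
    by exact (psi_nonzero_axis y Hy).
  destruct (determining_equations t x y 0 (psi_nonzero_axis y Hy))
    as (_ & _ & _ & E4); cbv zeta in E4.
  assert (Hchi_v : dV (vf_chi Q) t x y 0 = vf_phi Q t x y 0 / y + dT (vf_tau Q) t x y 0)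
    by (apply (Rmult_eq_reg_l (y ^ 2 + 0 ^ 2)); [rewrite E4; field; lra |];
        pose proof (psi_nonzero_axis y Hy); unfold psi_nonzero in *; lra).
  expand_at_test_jet; rewrite Hchi_v in Hre.
  apply (eq0_of_diff _ _ 0 Hre eq_refl); unfold Rho, abs_pow; field; lra.
Qed.

Lemma axis_dT_chi (t x y : R) : 0 < y -> dT (vf_chi Q) t x y 0 = y * dT (vf_chi Q) t x 1 0.
Proof.
  intro Hy; unfold dT.
  rewrite (Derive_ext _ (fun s => y * vf_chi Q s x 1 0)) by (intro; apply axis_forms, Hy).
  apply Derive_scal.
Qed.

Lemma axis_dXdX_phi (t x y : R) : 0 < y ->
  dX (dX (vf_phi Q)) t x y 0 = y * dX (dX (vf_phi Q)) t x 1 0.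
Proof.
  intro Hy; pose proof HQ as (_ & _ & Hphi & _).
  assert (Hx : forall x', dX (vf_phi Q) t x' y 0 = y * dX (vf_phi Q) t x' 1 0).
  { intro x'; unfold dX.
    rewrite (Derive_ext _ (fun s => y * (vf_phi Q t s 1 0 + dT (vf_tau Q) t 0 1 0 * ln y)))
      by (intro; apply axis_forms, Hy).
    rewrite Derive_scal, Derive_plus, Derive_const; [ring | | apply ex_derive_const].
    eexists; apply is_derive_dX; [exact Hphi | apply psi_nonzero_1]. }
  unfold dX at 1; rewrite (Derive_ext _ _ _ Hx), Derive_scal; reflexivity.
Qed.

Lemma phi_axis_and_dT_tau_vanish (t x : R) :
  vf_phi Q t x 1 0 = 0 /\ dT (vf_tau Q) t 0 1 0 = 0.
Proof.
  apply (exp_mul_affine_const gamma _ _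
           ((dT (vf_chi Q) t x 1 0 - dX (dX (vf_phi Q)) t x 1 0) / gamma) Hgamma).
  (* At [y = exp k] the axis equation reads [gamma exp (gamma k) (F + T k) = const]. *)
  intro k; pose proof (exp_pos k) as Hk.
  pose proof (axis_equation t x (exp k) Hk) as Heq.
  rewrite (proj1 (axis_forms t x (exp k) Hk)), axis_dT_chi, axis_dXdX_phi, abs_pow_exp, ln_exp
    in Heq by exact Hk.
  set (F := vf_phi Q t x 1 0) in *; set (T := dT (vf_tau Q) t 0 1 0) in *.
  assert (Hdiff : exp k * (dT (vf_chi Q) t x 1 0 - dX (dX (vf_phi Q)) t x 1 0)
                  = exp k * (gamma * exp (gamma * k) * (F + T * k))) by lra.
  apply Rmult_eq_reg_l in Hdiff; [|lra].
  rewrite Hdiff; field; exact Hgamma.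
Qed.

Lemma eta_const (t x u v : R) : psi_nonzero u v ->
  eta_re t x u v = eta_re t x 1 0 /\ eta_im t x u v = eta_im t x 1 0.
Proof.
  intro Huv; destruct (phi_axis_and_dT_tau_vanish t x) as [_ HT].
  assert (Hd : forall u' v', psi_nonzero u' v' ->
    (is_derive (fun s => eta_re t x s v') u' 0 /\ is_derive (fun s => eta_re t x u' s) v' 0) /\
    (is_derive (fun s => eta_im t x s v') u' 0 /\ is_derive (fun s => eta_im t x u' s) v' 0)).
  { intros u' v' Huv'.
    destruct (eta_derivatives t x u' v' Huv') as [[Hru Hiu] [Hrv Hiv]].
    rewrite HT in Hru, Hiu, Hrv, Hiv.
    split; split.
    - refine (is_derive_ext_R _ _ _ _ _ Hru); intro s; cbv beta; lra.
    - refine (is_derive_ext_R _ _ _ _ _ Hrv); intro s; cbv beta; lra.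
    - apply (is_derive_val _ _ _ _ Hiu); unfold Rdiv; ring.
    - apply (is_derive_val _ _ _ _ Hiv); unfold Rdiv; ring. }
  split; apply (punctured_plane_const (fun u v => _ t x u v)); try exact Huv;
    intros u' v' Huv'; apply (Hd u' v' Huv').
Qed.

Lemma phase_rotation_form (t x u v : R) : psi_nonzero u v ->
  vf_phi Q t x u v = - vf_chi Q t x 1 0 * v /\ vf_chi Q t x u v = vf_chi Q t x 1 0 * u.
Proof.
  intro Huv; destruct (eta_const t x u v Huv) as [Hre Him].
  assert (Hre1 : eta_re t x 1 0 = 0)
    by (unfold eta_re; rewrite (proj1 (phi_axis_and_dT_tau_vanish t x)); field).
  assert (Him1 : eta_im t x 1 0 = vf_chi Q t x 1 0) by (unfold eta_im; field).
  rewrite Hre1 in Hre; rewrite Him1 in Him; unfold eta_re, eta_im, psi_nonzero in *.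
  split.
  - replace (vf_phi Q t x u v) with
      (u * ((u * vf_phi Q t x u v + v * vf_chi Q t x u v) / (u ^ 2 + v ^ 2))
       - v * ((u * vf_chi Q t x u v - v * vf_phi Q t x u v) / (u ^ 2 + v ^ 2))) by (field; lra).
    rewrite Hre, Him; ring.
  - replace (vf_chi Q t x u v) with
      (v * ((u * vf_phi Q t x u v + v * vf_chi Q t x u v) / (u ^ 2 + v ^ 2))
       + u * ((u * vf_chi Q t x u v - v * vf_phi Q t x u v) / (u ^ 2 + v ^ 2))) by (field; lra).
    rewrite Hre, Him; ring.
Qed.

Lemma phi_on_u1 (t x s : R) : vf_phi Q t x 1 s = - vf_chi Q t x 1 0 * s.
Proof. exact (proj1 (phase_rotation_form t x 1 s (psi_nonzero_1 s))). Qed.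

Lemma phase_coefficient_dT (t x : R) : dT (vf_chi Q) t x 1 0 = 0.
Proof.
  pose proof (axis_equation t x 1 Rlt_0_1) as Heq.
  assert (Hphi : forall x', vf_phi Q t x' 1 0 = 0) by (intro; rewrite phi_on_u1; ring).
  assert (HdX : forall x', dX (vf_phi Q) t x' 1 0 = 0)
    by (intro; unfold dX; rewrite (Derive_ext _ _ _ Hphi); apply Derive_const).
  unfold dX at 1 in Heq; rewrite (Derive_ext _ _ _ HdX), Derive_const, Hphi in Heq; lra.
Qed.

Lemma phase_coefficient_dX (t x : R) : dX (vf_chi Q) t x 1 0 = 0.
Proof.
  set (Rho := abs_pow gamma 1 0).
  pose proof (symmetry_at_test_jet 0 0 0 0 t x 1 0 (- (Rho * 0)) (Rho * 1) 0 0
    (psi_nonzero_1 0) ltac:(unfold Rho, affine; ring) ltac:(unfold Rho, affine; ring))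
    as [Hre0 _].
  pose proof (symmetry_at_test_jet 0 0 0 0 t x 1 0 (- (Rho * 0)) (Rho * 1) 0 1
    (psi_nonzero_1 0) ltac:(unfold Rho, affine; ring) ltac:(unfold Rho, affine; ring))
    as [Hre1 _].
  rewrite (pr2_NLS_re_reduced Q HQ xi_vanishes tau_partials_vanish) in Hre0, Hre1
    by exact (psi_nonzero_1 0).
  expand_at_test_jet.
  (* Varying [v_x] only changes the terms [phi_xv], [phi_vx], [phi_vv] of [Dxx_lift phi],
     and [phi = - G v] with [G = chi(1,0)]. *)
  assert (Hmixed : dX (dV (vf_phi Q)) t x 1 0 + dV (dX (vf_phi Q)) t x 1 0
                   + dV (dV (vf_phi Q)) t x 1 0 = 0)
    by (apply (eq0_of_diff _ _ _ Hre1 Hre0); ring).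
  assert (HdV : forall x' s, dV (vf_phi Q) t x' 1 s = - vf_chi Q t x' 1 0).
  { intros x' s; unfold dV; rewrite (Derive_ext _ _ _ (phi_on_u1 t x')).
    apply is_derive_unique; auto_derive; auto; ring. }
  assert (HdX : forall s, dX (vf_phi Q) t x 1 s = - s * dX (vf_chi Q) t x 1 0).
  { intro s; unfold dX.
    rewrite (Derive_ext _ (fun x' => - s * vf_chi Q t x' 1 0)) by (intro; rewrite phi_on_u1; ring).
    apply Derive_scal. }
  assert (K1 : dX (dV (vf_phi Q)) t x 1 0 = - dX (vf_chi Q) t x 1 0)
    by (unfold dX at 1; rewrite (Derive_ext _ _ _ (fun x' => HdV x' 0)), Derive_opp; reflexivity).
  assert (K2 : dV (dX (vf_phi Q)) t x 1 0 = - dX (vf_chi Q) t x 1 0)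
    by (unfold dV at 1; rewrite (Derive_ext _ _ _ HdX);
        apply is_derive_unique; auto_derive; auto; ring).
  assert (K3 : dV (dV (vf_phi Q)) t x 1 0 = 0)
    by (unfold dV at 1; rewrite (Derive_ext _ _ _ (HdV x)); apply Derive_const).
  rewrite K1, K2, K3 in Hmixed; lra.
Qed.

Lemma phase_coefficient_const (t x : R) :
  vf_chi Q t x 1 0 = vf_chi Q 0 0 1 0.
Proof.
  pose proof HQ as (_ & _ & _ & Hchi).
  transitivity (vf_chi Q t 0 1 0).
  - apply (is_derive_0_const (fun s => vf_chi Q t s 1 0)); intros s _.
    apply (is_derive_val _ _ _ _ (is_derive_dX _ Hchi t s 1 0 (psi_nonzero_1 0))).
    apply phase_coefficient_dX.
  - apply (is_derive_0_const (fun s => vf_chi Q s 0 1 0)); intros s _.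
    apply (is_derive_val _ _ _ _ (is_derive_dT _ Hchi s 0 1 0 (psi_nonzero_1 0))).
    apply phase_coefficient_dT.
Qed.

Lemma tau_const (t x u v : R) : psi_nonzero u v ->
  vf_tau Q t x u v = vf_tau Q 0 0 1 0.
Proof.
  intro Huv; rewrite (tau_depends_on_t t x u v Huv).
  pose proof HQ as (Htau & _).
  apply (is_derive_0_const (fun s => vf_tau Q s 0 1 0)); intros s _.
  apply (is_derive_val _ _ _ _ (is_derive_dT _ Htau s 0 1 0 (psi_nonzero_1 0))).
  exact (proj2 (phi_axis_and_dT_tau_vanish s 0)).
Qed.

Lemma span_of_common_symmetry : in_span_M_Dt Q.
Proof.
  exists (vf_chi Q 0 0 1 0), (vf_tau Q 0 0 1 0); intros t x u v Huv.
  destruct (phase_rotation_form t x u v Huv) as [Hphi Hchi].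
  rewrite phase_coefficient_const in Hphi, Hchi.
  repeat split; try assumption.
  - exact (tau_const t x u v Huv).
  - exact (xi_vanishes t x u v Huv).
Qed.

End CommonSymmetry.

Lemma symmetry_of_span (gamma : R) (a b : R -> R) (Q : vfield) :
  smooth_vfield Q -> in_span_M_Dt Q -> is_lie_symmetry gamma a b Q.
Proof.
  intros HQ [c1 [c2 Hspan]] p Hp Hre Him.
  assert (Htau : forall t x u v, psi_nonzero u v -> vf_tau Q t x u v = 0 * u + 0 * v + c2)
    by (intros t x u v Huv; rewrite (proj1 (Hspan t x u v Huv)); ring).
  assert (Hxi : forall t x u v, psi_nonzero u v -> vf_xi Q t x u v = 0)
    by (intros t x u v Huv; apply (Hspan t x u v Huv)).
  assert (Hphi : forall t x u v, psi_nonzero u v -> vf_phi Q t x u v = 0 * u + - c1 * v + 0)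
    by (intros t x u v Huv; rewrite (proj1 (proj2 (proj2 (Hspan t x u v Huv)))); ring).
  assert (Hchi : forall t x u v, psi_nonzero u v -> vf_chi Q t x u v = c1 * u + 0 * v + 0)
    by (intros t x u v Huv; rewrite (proj2 (proj2 (proj2 (Hspan t x u v Huv)))); ring).
  assert (Htau' : forall t x u v, psi_nonzero u v ->
            dX (vf_tau Q) t x u v = 0 /\ dU (vf_tau Q) t x u v = 0 /\ dV (vf_tau Q) t x u v = 0)
    by (intros t x u v Huv; apply (partials_of_affine _ _ _ _ Htau t x u v Huv)).
  rewrite (pr2_NLS_re_reduced Q HQ Hxi Htau'), (pr2_NLS_im_reduced Q HQ Hxi Htau') by exact Hp.
  rewrite (Dxx_lift_affine _ _ _ _ p Hphi Hp), (Dxx_lift_affine _ _ _ _ p Hchi Hp).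
  unfold jphi, jchi; rewrite !Dt_lift; unfold lift.
  destruct (partials_of_affine _ _ _ _ Htau (p jT) (p jX) _ _ Hp) as (HT & _).
  destruct (partials_of_affine _ _ _ _ Hphi (p jT) (p jX) _ _ Hp) as (HphiT & _ & HphiU & HphiV).
  destruct (partials_of_affine _ _ _ _ Hchi (p jT) (p jX) _ _ Hp) as (HchiT & _ & HchiU & HchiV).
  rewrite HT, HphiT, HphiU, HphiV, HchiT, HchiU, HchiV, Hphi, Hchi by exact Hp.
  (* The linearized equations are [-c1] times the imaginary and [c1] times the real part
     of the equation. *)
  split.
  - apply (eq0_of_diff _ (- c1 * NLS_im gamma a b p) 0); [rewrite Him; ring | reflexivity |].
    unfold NLS_im, rho_u, rho_v, Rdiv; ring.
  - apply (eq0_of_diff _ (c1 * NLS_re gamma a b p) 0); [rewrite Hre; ring | reflexivity |].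
    unfold NLS_re, rho_u, rho_v, Rdiv; ring.
Qed.

Theorem lemma9 (gamma : R) (Hgamma : gamma <> 0) (Q : vfield) (HQ : smooth_vfield Q) :
  (forall a b : R -> R, smooth1 a -> smooth1 b -> is_lie_symmetry gamma a b Q)
  <-> in_span_M_Dt Q.
Proof.
  split.
  - intro HS; exact (span_of_common_symmetry gamma Q Hgamma HS HQ).
  - intros Hspan a b _ _; exact (symmetry_of_span gamma a b Q HQ Hspan).
Qed.
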